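(* For terms $\Gamma\vdash s,t:X$ of the language $\mathbf P$, $s\approx_{\mathbf P}t$ if and only if $[\![s]\!]=[\![t]\!]$ as subprobability kernels $[\![\Gamma]\!]\to D_{\le1}([\![X]\!])$. That is, $\mathrm{FinSubStoch}$ is fully abstract for $\mathbf P$.
   Context: $\mathbf{PSL}$ is the first-order language with types $A::=X\mid\mathsf{unit}\mid A\ast A$ ($X$ ranging over finite sets) and terms $t::=x\mid()\mid(t,t)\mid\pi_i t\mid \underline f(t)\mid\mathrm{let}\ x=t_1\ \mathrm{in}\ t_2$, where $\underline f:A\to B$ ranges over all subprobability kernels between the finite sets interpreting $A,B$ (including scoring and exact conditioning). $\mathbf P$ extends $\mathbf{PSL}$ with $\mathrm{if}\ t_1\ \mathrm{then}\ t_2\ \mathrm{else}\ t_3$ (with $\Gamma\vdash t_1:2$, $\Gamma\vdash t_2,t_3:A$). Types denote finite sets ($[\![\mathsf{unit}]\!]=\{*\}$, $[\![A\ast B]\!]=[\![A]\!]\times[\![B]\!]$) and terms $\Gamma\vdash t:A$ denote subprobability kernels: $[\![x]\!](a|\gamma)=[a=\gamma_x]$; $[\![()]\!]( *|\gamma)=1$; $[\![(s,t)]\!]((a,b)|\gamma)=[\![s]\!](a|\gamma)[\![t]\!](b|\gamma)$; $[\![\pi_1t]\!](a|\gamma)=\sum_b[\![t]\!]((a,b)|\gamma)$ (similarly $\pi_2$); $[\![\underline f(t)]\!](b|\gamma)=\sum_af(b|a)[\![t]\!](a|\gamma)$; $[\![\mathrm{let}\ x=s\ \mathrm{in}\ t]\!](b|\gamma)=\sum_a[\![s]\!](a|\gamma)[\![t]\!](b|\gamma,a)$;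 $[\![\mathrm{if}\ t_1\ \mathrm{then}\ t_2\ \mathrm{else}\ t_3]\!](a|\gamma)=[\![t_2]\!](a|\gamma)[\![t_1]\!](\mathrm{true}|\gamma)+[\![t_3]\!](a|\gamma)[\![t_1]\!](\mathrm{false}|\gamma)$. For a subdistribution $\varphi$, $\mathsf{normalize}(\varphi)=\varphi/Z$ with $Z=\sum_x\varphi(x)$ if $Z\ne0$, and $0$ otherwise. Closed $s,t$ are observationally equivalent, $s\approx t$, if $\mathsf{normalize}([\![s]\!])=\mathsf{normalize}([\![t]\!])$. Open terms are branching equivalent, $s\approx_{\mathbf P}t$, if $C[s]\approx C[t]$ for every closed well-typed $\mathbf P$ context $C[-]$. *)

From HB Require Import structures.
From mathcomp Require Import all_boot all_order all_algebra.
From mathcomp Require Import reals.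
Set Implicit Arguments. Unset Strict Implicit. Unset Printing Implicit Defensive.
Import Order.TTheory GRing.Theory Num.Theory.
Local Open Scope ring_scope.

Inductive ty : Type :=
| TFin : nat -> ty
| TUnit : ty
| TProd : ty -> ty -> ty.

Fixpoint tden (A : ty) : finType :=
  match A with
  | TFin n => 'I_n
  | TUnit => unit
  | TProd A B => (tden A * tden B)%type
  end.

Definition TBool : ty := TFin 2.
Definition btrue : tden TBool := @Ordinal 2 1 isT.
Definition bfalse : tden TBool := @Ordinal 2 0 isT.

(** Typing contexts (de Bruijn): a list of types, head = most recent variable. *)
Fixpoint cden (G : seq ty) : finType :=
  match G with
  | [::] => unit
  | A :: G' => (tden A * cden G')%type
  end.

Inductive var : seq ty -> ty -> Type :=
| VZ : forall G A, var (A :: G) A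
| VS : forall G A B, var G A -> var (B :: G) A.

Fixpoint lookup G A (v : var G A) : cden G -> tden A :=
  match v in var G A return cden G -> tden A with
  | VZ _ _ => fun e => e.1
  | VS _ _ _ v' => fun e => lookup v' e.2
  end.

Section Lang.
Variable R : realType.

(** Subprobability kernels X -> D_{<=1}(Y) between finite sets;
    kfun x y is f(y|x). *)
Record kern (X Y : finType) := Kern {
  kfun : X -> Y -> R;
  kfun_ge0 : forall x y, 0 <= kfun x y;
  kfun_sub : forall x, \sum_(y : Y) kfun x y <= 1
}.

(** Intrinsically typed terms of the language P (PSL + if-then-else). *)
Inductive tm : seq ty -> ty -> Type :=
| tvar : forall G A, var G A -> tm G A
| tunit : forall G, tm G TUnit
| tpair : forall G A B, tm G A -> tm G B -> tm G (TProd A B)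
| tfst : forall G A B, tm G (TProd A B) -> tm G A
| tsnd : forall G A B, tm G (TProd A B) -> tm G B
| tprim : forall G A B, kern (tden A) (tden B) -> tm G A -> tm G B
| tlet : forall G A B, tm G A -> tm (A :: G) B -> tm G B
| tif : forall G A, tm G TBool -> tm G A -> tm G A -> tm G A.

Fixpoint sem G A (t : tm G A) : cden G -> tden A -> R :=
  match t in tm G A return cden G -> tden A -> R with
  | tvar _ _ v => fun g a => (a == lookup v g)%:R
  | tunit _ => fun _ _ => 1
  | tpair _ _ _ s u => fun g ab => sem s g ab.1 * sem u g ab.2
  | tfst _ _ B u => fun g a => \sum_(b : tden B) sem u g (a, b)
  | tsnd _ A _ u => fun g b => \sum_(a : tden A) sem u g (a, b)
  | tprim _ A _ f u => fun g b => \sum_(a : tden A) kfun f a b * sem u g a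
  | tlet _ A _ s u => fun g b => \sum_(a : tden A) sem s g a * sem u (a, g) b
  | tif _ _ c u v => fun g a =>
      sem u g a * sem c g btrue + sem v g a * sem c g bfalse
  end.

(** Contexts: ctx G A D B is a term of type D |- B with one hole of type G |- A. *)
Inductive ctx (G : seq ty) (A : ty) : seq ty -> ty -> Type :=
| chole : ctx G A G A
| cpair1 : forall D B C, ctx G A D B -> tm D C -> ctx G A D (TProd B C)
| cpair2 : forall D B C, tm D B -> ctx G A D C -> ctx G A D (TProd B C)
| cfst : forall D B C, ctx G A D (TProd B C) -> ctx G A D B
| csnd : forall D B C, ctx G A D (TProd B C) -> ctx G A D C
| cprim : forall D B C, kern (tden B) (tden C) -> ctx G A D B -> ctx G A D C
| clet1 : forall D B C, ctx G A D B -> tm (B :: D) C -> ctx G A D C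
| clet2 : forall D B C, tm D B -> ctx G A (B :: D) C -> ctx G A D C
| cif1 : forall D B, ctx G A D TBool -> tm D B -> tm D B -> ctx G A D B
| cif2 : forall D B, tm D TBool -> ctx G A D B -> tm D B -> ctx G A D B
| cif3 : forall D B, tm D TBool -> tm D B -> ctx G A D B -> ctx G A D B.

Fixpoint plug G A D B (C : ctx G A D B) (s : tm G A) : tm D B :=
  match C in ctx _ _ D B return tm D B with
  | chole => s
  | cpair1 _ _ _ C' u => tpair (plug C' s) u
  | cpair2 _ _ _ u C' => tpair u (plug C' s)
  | cfst _ _ _ C' => tfst (plug C' s)
  | csnd _ _ _ C' => tsnd (plug C' s)
  | cprim _ _ _ f C' => tprim f (plug C' s)
  | clet1 _ _ _ C' u => tlet (plug C' s) u
  | clet2 _ _ _ u C' => tlet u (plug C' s)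
  | cif1 _ _ C' u v => tif (plug C' s) u v
  | cif2 _ _ c C' v => tif c (plug C' s) v
  | cif3 _ _ c u C' => tif c u (plug C' s)
  end.

Definition normalize (X : finType) (phi : X -> R) : X -> R :=
  fun x => let Z := \sum_(y : X) phi y in
           if Z == 0 then 0 else phi x / Z.

Definition obs_equiv B (s t : tm [::] B) : Prop :=
  forall b, normalize (sem s tt) b = normalize (sem t tt) b.

Definition branch_equiv G A (s t : tm G A) : Prop :=
  forall B (C : ctx G A [::] B), obs_equiv (plug C s) (plug C t).

End Lang.

From HB Require Import structures.
From mathcomp Require Import all_boot all_order all_algebra.
From mathcomp Require Import reals.
From Stdlib Require Import FunctionalExtensionality.
From mathcomp Require Import lra.
Set Implicit Arguments. Unset Strict Implicit. Unset Printing Implicit Defensive.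
Import Order.TTheory GRing.Theory Num.Theory.
Local Open Scope ring_scope.

(* Soundness is compositionality of the semantics.  For completeness, fix an
   environment g and an outcome x: close the context by let-binding constants
   for g, and observe [if coin then test_x(-) else false], where test_x keeps
   only the mass on x.  Its denotation gives true mass p/2 and false mass 1/2,
   with p = [[-]](x|g), so the normalized probability of true is p/(p+1), an
   injective function of p >= 0.  The coin is what lets the branching context
   see p despite normalization. *)

Section Kernels.
Variable R : realType.

Lemma sum_delta (X : finType) (x : X) (F : X -> R) :
  \sum_(a : X) (a == x)%:R * F a = F x.
Proof.
rewrite (eq_bigr (fun a => if a == x then F a else 0)) => [|a _].
  by rewrite -big_mkcond big_pred1_eq.
by case: (a == x); rewrite (mul1r, mul0r).
Qed.

Lemma sum_unit (F : unit -> R) : \sum_(u : unit) F u = F tt.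
Proof. by rewrite (big_pred1 tt) => // -[]. Qed.

Lemma sum_bool (F : tden TBool -> R) : \sum_y F y = F btrue + F bfalse.
Proof.
by rewrite big_ord_recl big_ord1 addrC; congr (F _ + F _); apply/val_inj.
Qed.

Lemma bool_neq_true (y : tden TBool) : y != btrue -> y = bfalse.
Proof. by case: y => -[|[|m]] Hm //= _; apply/val_inj. Qed.

(* A partial function, as the kernel that loses all mass where it is undefined. *)
Definition pfun_kfun (X Y : finType) (f : X -> option Y) : X -> Y -> R :=
  fun x y => (f x == Some y)%:R.

Lemma pfun_kfun_ge0 (X Y : finType) (f : X -> option Y) x y :
  0 <= pfun_kfun f x y.
Proof. exact: ler0n. Qed.

Lemma pfun_kfun_sub (X Y : finType) (f : X -> option Y) x :
  \sum_y pfun_kfun f x y <= 1.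
Proof.
rewrite /pfun_kfun; case: (f x) => [y0|]; last by rewrite big1.
under eq_bigr => y _ do rewrite (inj_eq Some_inj) eq_sym -[_%:R]mulr1.
by rewrite sum_delta.
Qed.

Definition pfun_kern (X Y : finType) (f : X -> option Y) : kern R X Y :=
  Kern (pfun_kfun_ge0 f) (pfun_kfun_sub f).

Lemma coin_kfun_ge0 (u : tden TUnit) (y : tden TBool) : 0 <= 2^-1 :> R.
Proof. by rewrite invr_ge0 ler0n. Qed.

Lemma coin_kfun_sub (u : tden TUnit) : \sum_(y : tden TBool) 2^-1 <= 1 :> R.
Proof. by rewrite sum_bool -[2^-1]mul1r -splitr. Qed.

Definition coin_kern : kern R (tden TUnit) (tden TBool) :=
  Kern coin_kfun_ge0 coin_kfun_sub.

Definition const_tm D X (x : tden X) : tm R D X :=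
  tprim (pfun_kern (fun _ : tden TUnit => Some x)) (tunit R D).

Lemma sem_const_tm D X (x : tden X) g a : sem (const_tm D x) g a = (a == x)%:R.
Proof. by rewrite /= sum_unit /pfun_kfun mulr1 (inj_eq Some_inj) eq_sym. Qed.

End Kernels.

Section Semantics.
Variable R : realType.

Lemma sem_ge0 G A (t : tm R G A) g a : 0 <= sem t g a.
Proof.
elim: t g a => //= *; rewrite ?ler0n ?ler01 ?mulr_ge0 ?addr_ge0 ?sumr_ge0 //.
all: by move=> *; rewrite mulr_ge0 ?kfun_ge0.
Qed.

Lemma sem_plug G A (s t : tm R G A) : sem s = sem t ->
  forall D B (C : ctx R G A D B), sem (plug C s) = sem (plug C t).
Proof.
move=> est D B; elim=> //= *;
  match goal with IH : sem (plug _ s) = _ |- _ => by rewrite IH end.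
Qed.

Fixpoint close_ctx G A D : cden D -> forall B, ctx R G A D B -> ctx R G A [::] B :=
  match D return cden D -> forall B, ctx R G A D B -> ctx R G A [::] B with
  | [::] => fun _ _ C => C
  | X :: D' => fun d _ C => close_ctx d.2 (clet2 (const_tm R D' d.1) C)
  end.

Lemma sem_close_ctx G A (s : tm R G A) D (d : cden D) B (C : ctx R G A D B) b :
  sem (plug (close_ctx d C) s) tt b = sem (plug C s) d b.
Proof.
elim: D d B C b => [[] //|X D IH [x d]] B C b.
rewrite IH -(sum_delta x (fun a => sem (plug C s) (a, d) b)).
by apply: eq_bigr => a _; rewrite -(@sem_const_tm R D X x d).
Qed.

Definition test_ctx {G n} (x : tden (TFin n)) : ctx R G (TFin n) G TBool :=
  cif2 (tprim (coin_kern R) (tunit R G))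
       (cprim (pfun_kern R (fun a => if a == x then Some btrue else None))
              (chole R G (TFin n)))
       (const_tm R G bfalse).

Lemma sem_test_ctx G n (x : tden (TFin n)) (u : tm R G (TFin n)) g y :
  sem (plug (test_ctx x) u) g y = if y == btrue then sem u g x / 2 else 2^-1.
Proof.
rewrite /= !sum_unit !mulr1 /pfun_kfun !(inj_eq Some_inj).
have [->|/bool_neq_true ->] := eqVneq y btrue.
- have hit a : ((if a == x then Some btrue else None) == Some btrue) = (a == x).
    by case: (a == x).
  under eq_bigr => a _ do rewrite hit.
  by rewrite sum_delta mul0r addr0.
- rewrite big1 ?mul0r ?add0r ?eqxx ?mul1r // => a _.
  by case: (a == x); rewrite mul0r.
Qed.

Lemma normalize_test_true (p : R) : 0 <= p ->
  normalize (fun y : tden TBool => if y == btrue then p / 2 else 2^-1) btrue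
  = p / (p + 1).
Proof.
move=> p_ge0; rewrite /normalize sum_bool eqxx.
have -> : p / 2 + 2^-1 = (p + 1) / 2 by rewrite mulrDl mul1r.
have p1_gt0 : 0 < p + 1 by rewrite ltr_wpDl.
by rewrite mulf_eq0 invr_eq0 !gt_eqF //= invf_div mulrA divfK ?pnatr_eq0.
Qed.

Lemma div_addr1_inj (a b : R) : 0 <= a -> 0 <= b ->
  a / (a + 1) = b / (b + 1) -> a = b.
Proof.
move=> a_ge0 b_ge0.
have a1_neq0 : a + 1 != 0 by rewrite gt_eqF // ltr_wpDl.
have b1_neq0 : b + 1 != 0 by rewrite gt_eqF // ltr_wpDl.
by move/eqP; rewrite eqr_div // => /eqP; lra.
Qed.

End Semantics.

Theorem proposition6p12 (R : realType) (G : seq ty) (n : nat)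
    (s t : tm R G (TFin n)) :
  branch_equiv s t <->
  (forall (g : cden G) (x : tden (TFin n)), sem s g x = sem t g x).
Proof.
split=> [equiv_st g x | sem_st B C b].
- have sem_test u : sem (plug (close_ctx g (test_ctx R x)) u) tt
                     = fun y => if y == btrue then sem u g x / 2 else 2^-1.
    by apply: functional_extensionality => y; rewrite sem_close_ctx sem_test_ctx.
  have := equiv_st _ (close_ctx g (test_ctx R x)) btrue.
  rewrite !sem_test !normalize_test_true ?sem_ge0 //.
  by apply: div_addr1_inj; exact: sem_ge0.
- have est : sem s = sem t.
    by do 2 (apply: functional_extensionality => ?).
  by rewrite /normalize (sem_plug est).
Qed.
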